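(* Consider a PIR scheme for a graph $G=(\mathcal{S},\mathcal{W})$. Let $S\in\mathcal{S}$ be a server of degree $\delta$ and let $S_1,\dots,S_\delta$ be any enumeration of its neighbors. Then \[ H(A_S)\ \ge\ \sum_{i=1}^{\delta}\max\Big\{0,\ L-\sum_{j=i}^{\delta}H(A_{S_j})\Big\}, \] where $A_T$ denotes the answer of server $T$.
   Context: Graph-based PIR model (non-colluding servers, 2-replication). A simple graph $G=(\mathcal{S},\mathcal{W})$ has vertex set $\mathcal{S}$ of $N$ servers and edge set $\mathcal{W}=\{W_1,\dots,W_K\}$ of files; each file is identified with the edge of the two servers storing it, $W_{T}$ denotes the set of files stored on server $T$. Files are independent, each uniform on $\mathbb{F}_2^L$. A user wants $W_\theta$, $\theta$ uniform on $[K]$ and independent of the files; it generates one query per server, $\mathcal{Q}$ denoting the set of all queries, with $\mathcal{Q}$ independent of the files. Each server $T$ returns an answer $A_T$ that is a deterministic function of its query and $W_T$. Reliability: $W_\theta$ is determined by all answers and queries. Privacy: for each server $T$, $H(\theta\mid Q_T,W_T)=\log K$. *)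

From HB Require Import structures.
From mathcomp Require Import all_boot all_order all_algebra.
From mathcomp Require Import reals exp.
Set Implicit Arguments. Unset Strict Implicit. Unset Printing Implicit Defensive.
Import Order.TTheory GRing.Theory Num.Theory.
Local Open Scope ring_scope.

Section Entropy.
Variable R : realType.

Definition log2 (x : R) : R := ln x / ln 2.

Definition dist {Om A : finType} (P : Om -> R) (X : Om -> A) (a : A) : R :=
  \sum_(w | X w == a) P w.

Definition entropy {Om A : finType} (P : Om -> R) (X : Om -> A) : R :=
  - \sum_(a : A) (if dist P X a == 0 then 0 else dist P X a * log2 (dist P X a)).

Definition centropy {Om A B : finType} (P : Om -> R) (X : Om -> A) (Y : Om -> B) : R :=
  entropy P (fun w => (X w, Y w)) - entropy P Y.
End Entropy.

(* Servers : finType T.  Files : finType E, each file f stored on the two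
   servers of the 2-element set [ends f]; [ends] injective = simple graph.  *)

Definition stored_on {T E : finType} (ends : E -> {set T}) (S : T) (f : E) : bool :=
  S \in ends f.

Definition degree {T E : finType} (ends : E -> {set T}) (S : T) : nat :=
  #|[set f | S \in ends f]|.

Definition neighbor {T E : finType} (ends : E -> {set T}) (S U : T) : Prop :=
  exists f, ends f = [set S; U].

(* The sample space: (theta, queries) together with the file contents. *)
Definition Omega (T E Qt : finType) (L : nat) : finType :=
  ((E * {ffun T -> Qt}) * {ffun E -> 'rV['F_2]_L})%type.

(* Full pmf: the user's pmf on (theta, queries) times the independent
   uniform law of the K files on F_2^L. *)
Definition pir_pmf (R : realType) (T E Qt : finType) (L : nat)
  (pu : E * {ffun T -> Qt} -> R) (w : Omega T E Qt L) : R :=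
  pu w.1 * ((2 ^+ L)^-1) ^+ #|E|.

Definition theta_rv (T E Qt : finType) (L : nat) (w : Omega T E Qt L) : E := w.1.1.
Definition queries_rv (T E Qt : finType) (L : nat) (w : Omega T E Qt L) : {ffun T -> Qt} := w.1.2.
Definition query_rv (T E Qt : finType) (L : nat) (S : T) (w : Omega T E Qt L) : Qt := w.1.2 S.
Definition desired_rv (T E Qt : finType) (L : nat) (w : Omega T E Qt L) : 'rV['F_2]_L :=
  w.2 w.1.1.
(* W_S : the files stored on server S (files not on S are masked by None) *)
Definition stored_rv (T E Qt : finType) (L : nat) (ends : E -> {set T}) (S : T)
  (w : Omega T E Qt L) : {ffun E -> option 'rV['F_2]_L} :=
  [ffun f => if S \in ends f then Some (w.2 f) else None].
Definition answer_rv (T E Qt At : finType) (L : nat)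
  (ans : T -> Qt -> {ffun E -> 'rV['F_2]_L} -> At) (S : T)
  (w : Omega T E Qt L) : At := ans S (w.1.2 S) w.2.
Definition answers_rv (T E Qt At : finType) (L : nat)
  (ans : T -> Qt -> {ffun E -> 'rV['F_2]_L} -> At)
  (w : Omega T E Qt L) : {ffun T -> At} := [ffun S => ans S (w.1.2 S) w.2].

From HB Require Import structures.
From mathcomp Require Import all_boot all_order all_algebra.
From mathcomp Require Import reals exp.
From mathcomp Require Import ring lra.
Import Order.TTheory GRing.Theory Num.Theory.
Local Open Scope ring_scope.
Set Implicit Arguments. Unset Strict Implicit. Unset Printing Implicit Defensive.

(* Fix theta = e_i, the file shared by S and its i-th neighbour S_i, and the
   queries; the files are then still uniform.  A genie reveals every file except
   e_i, ..., e_delta, which determines the answers of all servers other than S,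
   S_i, ..., S_delta.  By reliability W_(e_i) is then a function of A_S, of the
   answers of S_i, ..., S_delta and of the revealed files, whence
     L <= [H(A_S | C_i) - H(A_S | C_(i+1))] + sum_(j >= i) H(A_(S_j)),
   C_i denoting the files revealed at stage i.  Privacy makes the query of each
   single server independent of theta, so averaging over the queries removes
   the dependence on the conditioning theta = e_i.  The bracketed terms then
   telescope over i to at most H(A_S). *)

Section Gibbs.
Variable R : realType.

Lemma ln_le_subr1 (y : R) : 0 < y -> ln y <= y - 1.
Proof. by move=> y0; have := @le_ln1Dx R (y - 1); rewrite addrCA subrr addr0; apply; lra. Qed.

(* Applying [ln_le_subr1] to [sqrt y] gives [(sqrt y - 1)^2 <= 0]. *)
Lemma ln_eq_subr1 (y : R) : 0 < y -> ln y = y - 1 -> y = 1.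
Proof.
move=> y0 lny; set s := Num.sqrt y.
have s0 : 0 < s by rewrite sqrtr_gt0.
have ys : y = s ^+ 2 by rewrite sqr_sqrtr // ltW.
have lns : ln y = ln s *+ 2 by rewrite ys lnXn.
have le_s : s ^+ 2 - 1 <= (s - 1) *+ 2.
  by rewrite -ys -lny lns !mulr2n; have := ln_le_subr1 s0; lra.
have sq0 : (s - 1) ^+ 2 <= 0.
  have -> : (s - 1) ^+ 2 = s ^+ 2 - 1 - (s - 1) *+ 2 by ring.
  by rewrite subr_le0.
have /eqP : (s - 1) ^+ 2 = 0 by apply/le_anti; rewrite sq0 sqr_ge0.
by rewrite sqrf_eq0 subr_eq0 => /eqP s1; rewrite ys s1 expr1n.
Qed.

Definition relent (I : finType) (mu nu : I -> R) : R :=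
  \sum_i mu i * (ln (mu i) - ln (nu i)).

Variables (I : finType) (mu nu : I -> R).
Hypotheses (mu_ge0 : forall i, 0 <= mu i) (nu_ge0 : forall i, 0 <= nu i).
Hypothesis mu_nu : forall i, 0 < mu i -> 0 < nu i.

Let slack i := nu i - mu i + mu i * (ln (mu i) - ln (nu i)).

Let slack_ge0 i : 0 <= slack i.
Proof.
rewrite /slack; have [->|mu_i] := eqVneq (mu i) 0; first by rewrite mul0r !subr0 addr0.
have mu_gt0 : 0 < mu i by rewrite lt0r mu_i mu_ge0.
have nu_gt0 := mu_nu mu_gt0.
have := ln_le_subr1 (divr_gt0 nu_gt0 mu_gt0).
rewrite ln_div ?posrE // -(ler_pM2l mu_gt0) !mulrBr mulrCA divff // mulr1.
lra.
Qed.

Let sum_slack : \sum_i slack i = \sum_i nu i - \sum_i mu i + relent mu nu.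
Proof. by rewrite /relent -sumrB -big_split. Qed.

Lemma relent_ge : \sum_i mu i - \sum_i nu i <= relent mu nu.
Proof.
have : 0 <= \sum_i slack i by apply: sumr_ge0 => i _; apply: slack_ge0.
rewrite sum_slack; lra.
Qed.

Lemma relent_eq0 : \sum_i nu i = \sum_i mu i -> relent mu nu = 0 -> mu =1 nu.
Proof.
move=> sum_eq rel0 i.
have /psumr_eq0P/(_ i isT) : \sum_i slack i = 0 by rewrite sum_slack sum_eq rel0; lra.
move=> /(_ (fun i _ => slack_ge0 i)); rewrite /slack.
have [mu0|mu_i] := eqVneq (mu i) 0; first by rewrite mu0 mul0r !subr0 addr0 => ->.
have mu_gt0 : 0 < mu i by rewrite lt0r mu_i mu_ge0.
have nu_gt0 := mu_nu mu_gt0.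
move=> slack0; suff : nu i / mu i = 1 by move/divr1_eq.
apply: ln_eq_subr1; first exact: divr_gt0.
apply: (mulfI mu_i); rewrite ln_div ?posrE // !mulrBr mulrCA divff // mulr1; lra.
Qed.

End Gibbs.

Section NatsEntropy.
Variable R : realType.

Definition Hnats (Om A : finType) (P : Om -> R) (X : Om -> A) : R :=
  - \sum_a dist P X a * ln (dist P X a).

Definition cHnats (Om A B : finType) (P : Om -> R) (X : Om -> A) (Y : Om -> B) : R :=
  Hnats P (fun w => (X w, Y w)) - Hnats P Y.

Lemma ln2_gt0 : 0 < ln (2 : R).
Proof. by rewrite ln_gt0 // ltr1n. Qed.

Lemma entropyE (Om A : finType) (P : Om -> R) (X : Om -> A) :
  entropy P X = Hnats P X / ln 2.
Proof.
rewrite /entropy /Hnats mulNr big_distrl /=; congr (- _); apply: eq_bigr => a _.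
by case: eqP => [->|_]; rewrite ?mul0r // /log2 mulrA.
Qed.

Lemma centropyE (Om A B : finType) (P : Om -> R) (X : Om -> A) (Y : Om -> B) :
  centropy P X Y = cHnats P X Y / ln 2.
Proof. by rewrite /centropy !entropyE -mulrBl. Qed.

Lemma sum_pair (I J : finType) (F : I * J -> R) :
  \sum_t F t = \sum_i \sum_j F (i, j).
Proof. by rewrite pair_bigA; apply: eq_bigr => -[]. Qed.

Variables (Om : finType) (P : Om -> R).

Lemma sum_dist_mul (A : finType) (X : Om -> A) (F : A -> R) :
  \sum_a dist P X a * F a = \sum_w P w * F (X w).
Proof.
rewrite [RHS](partition_big X predT) //=; apply: eq_bigr => a _.
by rewrite /dist big_distrl; apply: eq_bigr => w /eqP <-.
Qed.

Lemma sum_dist (A : finType) (X : Om -> A) : \sum_a dist P X a = \sum_w P w.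
Proof.
under eq_bigr do rewrite -[dist _ _ _]mulr1.
by rewrite sum_dist_mul; under eq_bigr do rewrite mulr1.
Qed.

Lemma HnatsE (A : finType) (X : Om -> A) :
  Hnats P X = - \sum_w P w * ln (dist P X (X w)).
Proof. by rewrite /Hnats sum_dist_mul. Qed.

Lemma sum_dist_pair (A C : finType) (X : Om -> A) (Z : Om -> C) z :
  \sum_x dist P (fun w => (X w, Z w)) (x, z) = dist P Z z.
Proof.
rewrite /dist [RHS](partition_big X predT) //=; apply: eq_bigr => x _.
by apply: eq_bigl => w; rewrite xpair_eqE andbC.
Qed.

Lemma eq_dist (A : finType) (X X' : Om -> A) : X =1 X' -> dist P X =1 dist P X'.
Proof. by move=> eqX a; apply: eq_bigl => w; rewrite eqX. Qed.

Lemma eq_Hnats (A : finType) (X X' : Om -> A) : X =1 X' -> Hnats P X = Hnats P X'.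
Proof. by move=> eqX; rewrite /Hnats; under eq_bigr do rewrite (eq_dist eqX). Qed.

Hypothesis P_ge0 : forall w, 0 <= P w.

Lemma dist_ge0 (A : finType) (X : Om -> A) a : 0 <= dist P X a.
Proof. exact: sumr_ge0. Qed.

Lemma dist_le_comp (A B : finType) (Y : Om -> A) (f : A -> B) y :
  dist P Y y <= dist P (fun w => f (Y w)) (f y).
Proof.
rewrite /dist !(big_mkcond (fun w => _ == _)); apply: ler_sum => w _.
by have [->|_] := eqVneq (Y w) y; rewrite ?eqxx //; case: ifP.
Qed.

Lemma dist_gt0 (A : finType) (X : Om -> A) w : 0 < P w -> 0 < dist P X (X w).
Proof.
move=> Pw; apply: lt_le_trans Pw _.
by rewrite /dist (bigD1 w) //= lerDl; apply: sumr_ge0.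
Qed.

Lemma Hnats_le_fun (A B : finType) (X : Om -> A) (Y : Om -> B) (f : B -> A) :
  (forall w, X w = f (Y w)) -> Hnats P X <= Hnats P Y.
Proof.
move=> /eq_Hnats ->; rewrite !HnatsE lerN2; apply: ler_sum => w _.
have [->|Pw] := eqVneq (P w) 0; first by rewrite !mul0r.
have Pw_gt0 : 0 < P w by rewrite lt0r Pw P_ge0.
by rewrite ler_wpM2l // ler_ln ?posrE ?dist_gt0 ?dist_le_comp.
Qed.

Lemma Hnats_relabel (A B : finType) (X : Om -> A) (Y : Om -> B) (f : B -> A) (g : A -> B) :
  (forall w, X w = f (Y w)) -> (forall w, Y w = g (X w)) -> Hnats P X = Hnats P Y.
Proof. by move=> XY YX; apply/le_anti; rewrite !(Hnats_le_fun XY, Hnats_le_fun YX). Qed.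

Lemma Hnats_pair_det (A B : finType) (X : Om -> A) (Y : Om -> B) (x0 : A) :
  (forall w w', Y w = Y w' -> X w = X w') -> Hnats P (fun w => (X w, Y w)) = Hnats P Y.
Proof.
move=> detX.
apply: (Hnats_relabel (f := fun y => (if [pick w | Y w == y] is Some w then X w else x0, y))
                      (g := snd)) => // w.
by case: pickP => [w' /eqP /detX ->|/(_ w)]; rewrite ?eqxx.
Qed.

(* Shannon's inequality I(X;Y|Z) >= 0: [nu] below is the law of X and Y made
   conditionally independent given Z. *)
Lemma Hnats_submod (A B C : finType) (X : Om -> A) (Y : Om -> B) (Z : Om -> C) :
  Hnats P (fun w => (X w, Y w, Z w)) + Hnats P Z <=
  Hnats P (fun w => (X w, Z w)) + Hnats P (fun w => (Y w, Z w)).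
Proof.
set pXYZ := dist P (fun w => (X w, Y w, Z w)).
set pXZ := dist P (fun w => (X w, Z w)); set pYZ := dist P (fun w => (Y w, Z w)).
set pZ := dist P Z.
pose nu (t : A * B * C) := pXZ (t.1.1, t.2) * pYZ (t.1.2, t.2) / pZ t.2.
have le_marg (D : finType) (m : A * B * C -> D) (V : Om -> D) :
    (forall w, V w = m (X w, Y w, Z w)) -> forall t, pXYZ t <= dist P V (m t).
  by move=> Vm t; rewrite (eq_dist Vm); apply: dist_le_comp.
have nu_ge0 t : 0 <= nu t by rewrite !(mulr_ge0, invr_ge0, dist_ge0).
have mu_nu t : 0 < pXYZ t -> 0 < nu t.
  move=> mu_gt0.
  have pos (D : finType) (m : A * B * C -> D) (V : Om -> D) :
      (forall w, V w = m (X w, Y w, Z w)) -> 0 < dist P V (m t).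
    by move=> Vm; apply: lt_le_trans mu_gt0 (le_marg _ _ _ Vm t).
  rewrite divr_gt0 ?mulr_gt0 //.
  - by apply: (pos _ (fun t => (t.1.1, t.2))).
  - by apply: (pos _ (fun t => (t.1.2, t.2))).
  - by apply: (pos _ snd).
have sum_nu : \sum_t nu t = \sum_t pXYZ t.
  rewrite sum_dist sum_pair -(sum_dist Z) exchange_big /=.
  under eq_bigr do rewrite sum_pair exchange_big /=.
  apply: eq_bigr => c _; rewrite /nu /=.
  under eq_bigr do rewrite -!big_distrl /= sum_dist_pair.
  rewrite -big_distrl -big_distrr /= sum_dist_pair -/pZ.
  by have [->|pZc] := eqVneq (pZ c) 0; rewrite ?mul0r // mulfK.
have := relent_ge (@dist_ge0 _ _) nu_ge0 mu_nu; rewrite sum_nu subrr /relent sum_dist_mul.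
rewrite !HnatsE -/pXYZ -/pXZ -/pYZ -/pZ -!sumrN -!big_split /= => rel_ge0.
rewrite -subr_ge0 -sumrB (eq_bigr (fun w => P w *
  (ln (pXYZ (X w, Y w, Z w)) - ln (nu (X w, Y w, Z w))))) // => w _.
have [->|Pw] := eqVneq (P w) 0; first by rewrite !mul0r; lra.
have Pw_gt0 : 0 < P w by rewrite lt0r Pw P_ge0.
have pos (D : finType) (V : Om -> D) : dist P V (V w) \is Num.pos.
  by rewrite posrE dist_gt0.
by rewrite /nu /= ln_div ?lnM ?rpredM ?pos //; ring.
Qed.

Lemma cHnats_mono (A B C : finType) (X : Om -> A) (Y : Om -> B) (f : B -> C) :
  cHnats P X Y <= cHnats P X (fun w => f (Y w)).
Proof.
have := Hnats_submod X Y (fun w => f (Y w)); rewrite /cHnats.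
rewrite (@Hnats_relabel _ _ (fun w => (X w, Y w, f (Y w))) (fun w => (X w, Y w))
  (fun p => (p.1, p.2, f p.2)) fst) //.
rewrite (@Hnats_relabel _ _ (fun w => (Y w, f (Y w))) Y (fun y => (y, f y)) fst) //.
lra.
Qed.

Lemma cHnats0_fun (A B : finType) (X : Om -> A) (Y : Om -> B) :
  cHnats P X Y = 0 ->
  forall w w', 0 < P w -> 0 < P w' -> Y w = Y w' -> X w = X w'.
Proof.
set pXY := dist P (fun w => (X w, Y w)); set pY := dist P Y.
have pXY_gt0 w : 0 < P w -> 0 < pXY (X w, Y w).
  exact: (dist_gt0 (fun w => (X w, Y w))).
have term_ge0 w : 0 <= P w * (ln (pY (Y w)) - ln (pXY (X w, Y w))).
  have [->|Pw] := eqVneq (P w) 0; first by rewrite mul0r.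
  have Pw_gt0 : 0 < P w by rewrite lt0r Pw P_ge0.
  rewrite mulr_ge0 // subr_ge0 ler_ln ?posrE ?pXY_gt0 ?dist_gt0 //.
  exact: (dist_le_comp (fun w => (X w, Y w)) snd).
rewrite /cHnats !HnatsE -/pXY -/pY opprK addrC -sumrB.
under eq_bigr do rewrite -mulrBr.
move=> cH0 w w' Pw Pw' Yww'; apply/eqP/negPn/negP => Xww'.
have pXY_eq : pXY (X w, Y w) = pY (Y w).
  have /eqP := psumr_eq0P (fun v _ => term_ge0 v) cH0 (i := w) isT.
  rewrite mulf_eq0 (gt_eqF Pw) subr_eq0 => /eqP ln_eq.
  by apply/esym/ln_inj; rewrite ?posrE ?pXY_gt0 ?dist_gt0.
have := sum_dist_pair X Y (Y w).
rewrite (bigD1 (X w)) // (bigD1 (X w')) 1?eq_sym //= -/pXY -/pY -pXY_eq.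
have : 0 < pXY (X w', Y w) by rewrite Yww' pXY_gt0.
have : 0 <= \sum_(x | (x != X w) && (x != X w')) pXY (x, Y w).
  by apply: sumr_ge0 => *; apply: dist_ge0.
lra.
Qed.

Hypothesis P_sum1 : \sum_w P w = 1.

Lemma Hnats_const (A : finType) (c : A) : Hnats P (fun _ => c) = 0.
Proof.
rewrite HnatsE (_ : dist P _ c = 1) ?ln1; first by rewrite big1 ?oppr0 // => w _; rewrite mulr0.
by rewrite -P_sum1; apply: eq_bigl => w; rewrite eqxx.
Qed.

Lemma cHnats_le (A B : finType) (X : Om -> A) (Y : Om -> B) : cHnats P X Y <= Hnats P X.
Proof.
apply: le_trans (cHnats_mono X Y (fun _ => tt)) _.
rewrite /cHnats Hnats_const subr0.
by rewrite (@Hnats_relabel _ _ (fun w => (X w, tt)) X (fun x => (x, tt)) fst).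
Qed.

Lemma Hnats_subadd (A B : finType) (X : Om -> A) (Y : Om -> B) :
  Hnats P (fun w => (X w, Y w)) <= Hnats P X + Hnats P Y.
Proof. by rewrite -lerBlDr cHnats_le. Qed.

Lemma eq_cHnats (A B : finType) (X : Om -> A) (Y Y' : Om -> B) :
  Y =1 Y' -> cHnats P X Y = cHnats P X Y'.
Proof.
move=> eqY; rewrite /cHnats (eq_Hnats eqY).
by rewrite (@eq_Hnats _ _ (fun w => (X w, Y' w))) // => w; rewrite eqY.
Qed.

Lemma cHnats_relabel (A B B' : finType) (X : Om -> A) (Y : Om -> B) (Y' : Om -> B')
    (f : B' -> B) (g : B -> B') :
  (forall w, Y w = f (Y' w)) -> (forall w, Y' w = g (Y w)) -> cHnats P X Y = cHnats P X Y'.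
Proof.
move=> YY' Y'Y; rewrite /cHnats (Hnats_relabel YY' Y'Y).
by rewrite (@Hnats_relabel _ _ (fun w => (X w, Y w)) (fun w => (X w, Y' w))
  (fun p => (p.1, f p.2)) (fun p => (p.1, g p.2))) // => w /=; [rewrite -YY'|rewrite -Y'Y].
Qed.

(* H(X|V) + H(Y|X,V) = H(X,Y|V) <= H(Y,Z|V) <= H(Y|V) + H(Z). *)
Lemma cHnats_decode_le (A B C D : finType) (X : Om -> D) (Y : Om -> A) (Z : Om -> B)
    (V : Om -> C) (x0 : D) :
  (forall w w', (Y w, Z w, V w) = (Y w', Z w', V w') -> X w = X w') ->
  cHnats P X V <= cHnats P Y V - cHnats P Y (fun w => (X w, V w)) + Hnats P Z.
Proof.
move=> decX; rewrite /cHnats.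
have le_YXV : Hnats P (fun w => (Y w, (X w, V w))) <= Hnats P (fun w => (Y w, V w)) + Hnats P Z.
  apply: le_trans (_ : _ <= Hnats P (fun w => (X w, (Y w, Z w, V w)))) _.
    by apply: (Hnats_le_fun (f := fun p => (p.2.1.1, (p.1, p.2.2)))).
  rewrite (Hnats_pair_det x0 decX).
  apply: le_trans (Hnats_subadd (fun w => (Y w, V w)) Z).
  by apply: (Hnats_le_fun (f := fun p => (p.1.1, p.2, p.1.2))).
lra.
Qed.

Section CondUniform.
Variables (K B : finType) (Th : Om -> K) (Y : Om -> B).
Hypothesis K_gt0 : (0 < #|K|)%N.

Let pThY := dist P (fun w => (Th w, Y w)).
Let unifY (t : K * B) := dist P Y t.2 / #|K|%:R.

Let pThY_ge0 t : 0 <= pThY t. Proof. exact: dist_ge0. Qed.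

Let unifY_ge0 t : 0 <= unifY t. Proof. by rewrite divr_ge0 ?dist_ge0. Qed.

Let pThY_unifY t : 0 < pThY t -> 0 < unifY t.
Proof.
move=> pos; rewrite divr_gt0 ?ltr0n // (lt_le_trans pos) //.
exact: (dist_le_comp (fun w => (Th w, Y w)) snd).
Qed.

Let sum_unifY : \sum_t unifY t = \sum_t pThY t.
Proof.
rewrite !sum_dist P_sum1 sum_pair /unifY /=.
under eq_bigr do rewrite -big_distrl /= sum_dist P_sum1 mul1r.
by rewrite sumr_const (_ : #|xpredT| = #|K|) // -[LHS]mulr_natr mulVf ?gt_eqF ?ltr0n.
Qed.

Let relent_unifY : relent pThY unifY = ln #|K|%:R - cHnats P Th Y.
Proof.
rewrite /relent sum_dist_mul /cHnats !HnatsE -/pThY opprK.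
rewrite (eq_bigr (fun w => P w * ln #|K|%:R + P w * ln (pThY (Th w, Y w))
                                  - P w * ln (dist P Y (Y w)))).
  by rewrite !sumrB big_split /= -big_distrl /= P_sum1 mul1r; lra.
move=> w _; have [->|Pw] := eqVneq (P w) 0; first by rewrite !mul0r; lra.
have Pw_gt0 : 0 < P w by rewrite lt0r Pw P_ge0.
by rewrite /unifY ln_div ?posrE ?dist_gt0 ?ltr0n //; ring.
Qed.

Lemma cHnats_le_ln_card : cHnats P Th Y <= ln #|K|%:R.
Proof.
have := relent_ge pThY_ge0 unifY_ge0 pThY_unifY.
by rewrite sum_unifY subrr relent_unifY subr_ge0.
Qed.

Lemma cHnats_eq_ln_card_indep :
  cHnats P Th Y = ln #|K|%:R ->
  forall k y, dist P (fun w => (Th w, Y w)) (k, y) = dist P Y y / #|K|%:R.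
Proof.
move=> cH k y; apply: (relent_eq0 pThY_ge0 unifY_ge0 pThY_unifY sum_unifY _ (k, y)).
by rewrite relent_unifY cH subrr.
Qed.

End CondUniform.

Lemma Hnats_family_le (I A : finType) (Y : I -> Om -> A) (J : {set I}) :
  Hnats P (fun w => [ffun j => if j \in J then Some (Y j w) else None])
  <= \sum_(j in J) Hnats P (Y j).
Proof.
elim: {J}_.+1 {-2}J (ltnSn #|J|) => // n IHn J; rewrite ltnS => leJn.
have [->|[j0 J_j0]] := set_0Vmem J.
  rewrite big_set0 (@eq_Hnats _ _ (fun _ => [ffun=> None])) ?Hnats_const //.
  by move=> w; apply/ffunP => j; rewrite !ffunE inE.
rewrite (big_setD1 j0 J_j0) /=.
apply: le_trans (_ : _ <= Hnats P (fun w => (Y j0 w,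
    [ffun j => if j \in J :\ j0 then Some (Y j w) else None]))) _.
  apply: (Hnats_le_fun (f := fun p : A * {ffun I -> option A} =>
            [ffun j => if j == j0 then Some p.1 else p.2 j])) => w.
  apply/ffunP => j; rewrite !ffunE in_setD1.
  by case: eqVneq => [->|]; rewrite ?J_j0.
apply: le_trans (Hnats_subadd _ _) _; rewrite lerD2l IHn //.
by rewrite (cardsD1 j0 J) J_j0 add1n in leJn.
Qed.

End NatsEntropy.

Lemma sum_max0_le (R : realType) (I : finType) (a m : I -> R) (s : R) :
  (forall i, a i <= m i) -> (forall i, 0 <= m i) -> \sum_i m i <= s ->
  \sum_i Num.max 0 (a i) <= s.
Proof.
move=> le_am m_ge0; apply: le_trans; apply: ler_sum => i _.
by rewrite ge_max m_ge0 le_am.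
Qed.

Lemma eq_Hnats_dist (R : realType) (Om Om' A : finType) (P : Om -> R) (P' : Om' -> R)
    (X : Om -> A) (X' : Om' -> A) :
  dist P X =1 dist P' X' -> Hnats P X = Hnats P' X'.
Proof. by move=> eq_d; rewrite /Hnats; under eq_bigr do rewrite eq_d. Qed.

Lemma Hnats_mixture (R : realType) (Om I A : finType) (pi : I -> R) (Pk : I -> Om -> R)
    (P : Om -> R) (X : Om -> A) :
  (forall k, 0 <= pi k) -> (forall k w, 0 <= Pk k w) -> (forall k, \sum_w Pk k w = 1) ->
  \sum_k pi k = 1 -> (forall w, P w = \sum_k pi k * Pk k w) ->
  \sum_k pi k * Hnats (Pk k) X <= Hnats P X.
Proof.
move=> pi_ge0 Pk_ge0 Pk_sum1 pi_sum1 PE.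
have P_ge0 w : 0 <= P w by rewrite PE; apply: sumr_ge0 => k _; apply: mulr_ge0.
have P_sum1 : \sum_w P w = 1.
  under eq_bigr do rewrite PE.
  rewrite exchange_big /= -[RHS]pi_sum1; apply: eq_bigr => k _.
  by rewrite -big_distrr /= Pk_sum1 mulr1.
have distP a : dist P X a = \sum_k pi k * dist (Pk k) X a.
  rewrite /dist; under eq_bigr do rewrite PE.
  by rewrite exchange_big /=; apply: eq_bigr => k _; rewrite big_distrr.
(* Gibbs' inequality with [nu := dist P X] bounds each component. *)
have le_k k : pi k * Hnats (Pk k) X <=
              pi k * - \sum_a dist (Pk k) X a * ln (dist P X a).
  have [->|pi_k] := eqVneq (pi k) 0; first by rewrite !mul0r.
  have pi_gt0 : 0 < pi k by rewrite lt0r pi_k pi_ge0.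
  rewrite ler_pM2l // /Hnats lerN2.
  have mu_nu a : 0 < dist (Pk k) X a -> 0 < dist P X a.
    move=> pos; rewrite distP (bigD1 k) //=; apply: lt_le_trans (mulr_gt0 pi_gt0 pos) _.
    by rewrite lerDl; apply: sumr_ge0 => j _; rewrite mulr_ge0 ?dist_ge0.
  have := relent_ge (@dist_ge0 _ _ _ (Pk_ge0 k) _ X) (@dist_ge0 _ _ _ P_ge0 _ X) mu_nu.
  rewrite !sum_dist P_sum1 Pk_sum1 subrr /relent.
  under eq_bigr do rewrite mulrBr.
  by rewrite sumrB subr_ge0.
suff -> : Hnats P X = \sum_k pi k * - \sum_a dist (Pk k) X a * ln (dist P X a).
  by apply: ler_sum => k _; apply: le_k.
under [RHS]eq_bigr do rewrite mulrN big_distrr /=.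
rewrite sumrN exchange_big /=; congr (- _); apply: eq_bigr => a _.
by rewrite distP big_distrl /=; apply: eq_bigr => k _; rewrite mulrA.
Qed.

Section PIRScheme.
Variable R : realType.
Variables (T E : finType) (ends : E -> {set T}) (L : nat) (Qt At : finType).
Variable pu : E * {ffun T -> Qt} -> R.
Hypotheses (pu_ge0 : forall x, 0 <= pu x) (pu_sum1 : \sum_x pu x = 1).
Hypothesis theta_unif : forall k : E, \sum_(q : {ffun T -> Qt}) pu (k, q) = #|E|%:R^-1.
Variable ans : T -> Qt -> {ffun E -> 'rV['F_2]_L} -> At.

Local Notation files := {ffun E -> 'rV['F_2]_L}.
Local Notation P := (pir_pmf (R := R) (L := L) pu).
Local Notation K := (#|E|%:R : R).

Definition unif_files (W : files) : R := (2 ^+ L)^-1 ^+ #|E|.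

Lemma unif_files_gt0 W : 0 < unif_files W.
Proof. by rewrite exprn_gt0 // invr_gt0 exprn_gt0. Qed.

Lemma unif_files_ge0 W : 0 <= unif_files W.
Proof. exact/ltW/unif_files_gt0. Qed.

Lemma sum_unif_files : \sum_W unif_files W = 1.
Proof.
rewrite sumr_const [X in _ *+ X](_ : _ = #|{: files}|) // card_ffun card_mx card_Fp //.
by rewrite mul1n -[LHS]mulr_natr !natrX -exprMn mulVf ?expr1n // expf_neq0 ?pnatr_eq0.
Qed.

Lemma pir_pmf_ge0 w : 0 <= P w.
Proof. exact: mulr_ge0 (pu_ge0 _) (unif_files_ge0 w.2). Qed.

Lemma dist_pir_pmf_user (B : finType) (Z : E * {ffun T -> Qt} -> B) b :
  dist P (fun w => Z w.1) b = dist pu Z b.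
Proof.
rewrite /dist big_mkcond sum_pair [RHS]big_mkcond; apply: eq_bigr => x _ /=.
case: ifP => _; last by rewrite big1.
by rewrite -[RHS]mulr1 -sum_unif_files big_distrr.
Qed.

Lemma sum_pir_pmf : \sum_w P w = 1.
Proof.
rewrite -(sum_dist P (fun=> tt)) -pu_sum1 -(sum_dist pu (fun=> tt)).
by apply: eq_bigr => b _; apply: (dist_pir_pmf_user (fun=> tt)).
Qed.

Lemma card_files_gt0 : (0 < #|E|)%N.
Proof.
apply/card_gt0P; have [x _|none] := pickP (fun _ : E * {ffun T -> Qt} => true).
  by exists x.1.
by move: pu_sum1; rewrite big1 => [/esym/eqP|x]; rewrite ?oner_eq0 ?none.
Qed.

Lemma card_files_neq0 : K != 0.
Proof. by rewrite pnatr_eq0 -lt0n card_files_gt0. Qed.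

Hypothesis private : forall S : T,
  centropy P (@theta_rv T E Qt L) (fun w => (query_rv S w, stored_rv ends S w)) = log2 K.

(* Privacy gives H(theta | Q_T0) >= H(theta | Q_T0, W_T0) = log K, the largest
   possible value, which forces independence. *)
Lemma theta_query_indep T0 k a :
  dist pu (fun x => (x.1, x.2 T0)) (k, a) = dist pu (fun x => x.2 T0) a / K.
Proof.
have cH_full : cHnats P (@theta_rv T E Qt L)
                 (fun w => (query_rv T0 w, stored_rv ends T0 w)) = ln K.
  have ln2_neq0 := lt0r_neq0 (ln2_gt0 R).
  by rewrite -[LHS](divfK ln2_neq0) -centropyE private divfK.
have cH : cHnats P (@theta_rv T E Qt L) (query_rv T0) = ln K.
  apply/le_anti; rewrite (cHnats_le_ln_card pir_pmf_ge0 sum_pir_pmf _ _ card_files_gt0) /=.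
  rewrite -[leLHS]cH_full; exact: (cHnats_mono pir_pmf_ge0 _ _ fst).
have := cHnats_eq_ln_card_indep pir_pmf_ge0 sum_pir_pmf card_files_gt0 cH k a.
by rewrite (dist_pir_pmf_user (fun x => (x.1, x.2 T0))) (dist_pir_pmf_user (fun x => x.2 T0)).
Qed.

Definition expect (phi : {ffun T -> Qt} -> R) : R := \sum_x pu x * phi x.2.

Definition expect_given (k : E) (phi : {ffun T -> Qt} -> R) : R :=
  K * \sum_q pu (k, q) * phi q.

Lemma ler_expect (phi psi : {ffun T -> Qt} -> R) :
  (forall q, phi q <= psi q) -> expect phi <= expect psi.
Proof. by move=> le_phi; apply: ler_sum => x _; rewrite ler_wpM2l. Qed.

Lemma expect_ge0 (phi : {ffun T -> Qt} -> R) : (forall q, 0 <= phi q) -> 0 <= expect phi.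
Proof. by move=> phi_ge0; apply: sumr_ge0 => x _; rewrite mulr_ge0. Qed.

Lemma expect_sum (I : finType) (phi : I -> {ffun T -> Qt} -> R) :
  \sum_i expect (phi i) = expect (fun q => \sum_i phi i q).
Proof. by rewrite exchange_big; apply: eq_bigr => x _; rewrite big_distrr. Qed.

Lemma ler_expect_given k (phi psi : {ffun T -> Qt} -> R) :
  (forall q, 0 < pu (k, q) -> phi q <= psi q) -> expect_given k phi <= expect_given k psi.
Proof.
move=> le_phi; rewrite ler_wpM2l ?ler0n //; apply: ler_sum => q _.
have [pu0|pu_neq0] := eqVneq (pu (k, q)) 0; first by rewrite pu0 !mul0r.
by rewrite ler_wpM2l ?le_phi // lt0r pu_neq0 pu_ge0.
Qed.

Lemma expect_givenBl k c (phi : {ffun T -> Qt} -> R) :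
  expect_given k (fun q => c - phi q) = c - expect_given k phi.
Proof.
rewrite /expect_given; under eq_bigr do rewrite mulrBr.
by rewrite sumrB -big_distrl /= theta_unif mulrBr mulrA mulfV ?mul1r ?card_files_neq0.
Qed.

Lemma expect_given_sum k (I : finType) (p : pred I) (phi : I -> {ffun T -> Qt} -> R) :
  expect_given k (fun q => \sum_(i | p i) phi i q) = \sum_(i | p i) expect_given k (phi i).
Proof.
rewrite /expect_given -big_distrr /= exchange_big /=; congr (_ * _).
by apply: eq_bigr => q _; rewrite big_distrr.
Qed.

Lemma expect_given_query T0 k (phi : Qt -> R) :
  expect_given k (fun q => phi (q T0)) = expect (fun q => phi (q T0)).
Proof.
pose F (t : E * Qt) := if t.1 == k then phi t.2 else 0.
rewrite /expect_given; have -> : \sum_q pu (k, q) * phi (q T0) = \sum_x pu x * F (x.1, x.2 T0).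
  rewrite sum_pair (bigD1 k) //= [X in _ + X]big1 ?addr0 => [|k' /negbTE k'k].
    by apply: eq_bigr => q _; rewrite /F eqxx.
  by apply: big1 => q _; rewrite /F /= k'k mulr0.
rewrite -(sum_dist_mul pu (fun x => (x.1, x.2 T0)) F) sum_pair (bigD1 k) //=.
rewrite [X in _ + X]big1 ?addr0 => [|k' /negbTE k'k]; last first.
  by apply: big1 => a _; rewrite /F /= k'k mulr0.
rewrite /expect -(sum_dist_mul pu (fun x => x.2 T0) phi) big_distrr.
apply: eq_bigr => a _; rewrite /F /= eqxx theta_query_indep.
by rewrite mulrA mulrCA mulfV ?mulr1 ?card_files_neq0.
Qed.

(* Concavity of entropy: P mixes, over the user's randomness x, the uniform law
   of the files. *)
Lemma expect_Hnats_answer_le T0 :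
  expect (fun q => Hnats unif_files (ans T0 (q T0))) <= Hnats P (answer_rv ans T0).
Proof.
pose Px (x : E * {ffun T -> Qt}) (w : Omega T E Qt L) :=
  if w.1 == x then unif_files w.2 else 0.
have Px_ge0 x w : 0 <= Px x w by rewrite /Px; case: ifP; rewrite ?unif_files_ge0.
have Px_sum1 x : \sum_w Px x w = 1.
  rewrite sum_pair (bigD1 x) //= [X in _ + X]big1 ?addr0 => [|x' /negbTE x'x].
    by rewrite /Px /= eqxx sum_unif_files.
  by apply: big1 => W _; rewrite /Px /= x'x.
have PE w : P w = \sum_x pu x * Px x w.
  rewrite (bigD1 w.1) //= [X in _ + X]big1 ?addr0 => [|x /negbTE xw].
    by rewrite /Px eqxx.
  by rewrite /Px eq_sym xw mulr0.
suff -> : expect (fun q => Hnats unif_files (ans T0 (q T0))) =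
          \sum_x pu x * Hnats (Px x) (answer_rv ans T0).
  exact: Hnats_mixture (answer_rv ans T0) pu_ge0 Px_ge0 Px_sum1 pu_sum1 PE.
apply: eq_bigr => x _; congr (_ * _); apply: eq_Hnats_dist => b.
rewrite /dist big_mkcond [RHS]big_mkcond sum_pair (bigD1 x) //= [X in _ + X]big1 ?addr0.
  by apply: eq_bigr => W _; rewrite /Px /= eqxx.
by move=> x' /negbTE x'x; apply: big1 => W _; rewrite /Px /= x'x; case: ifP.
Qed.

Hypothesis reliable : centropy P (@desired_rv T E Qt L)
  (fun w => (answers_rv ans w, queries_rv w)) = 0.

Lemma desired_determined w w' : 0 < P w -> 0 < P w' ->
  (answers_rv ans w, queries_rv w) = (answers_rv ans w', queries_rv w') ->
  desired_rv w = desired_rv w'.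
Proof.
move=> Pw Pw'; apply: (cHnats0_fun (Y := fun w => (answers_rv ans w, queries_rv w))
                        pir_pmf_ge0 _ Pw Pw').
move: reliable; rewrite centropyE => /eqP.
by rewrite mulf_eq0 invr_eq0 (negbTE (lt0r_neq0 (ln2_gt0 R))) orbF => /eqP.
Qed.

Variables (S : T) (delta : nat) (nb : 'I_delta -> T).
Hypothesis ends_card : forall f, #|ends f| = 2%N.
Hypothesis ans_local : forall U q (W W' : files),
  (forall f, U \in ends f -> W f = W' f) -> ans U q W = ans U q W'.
Hypothesis nb_inj : injective nb.
Hypothesis nb_onto : forall U, (exists i, nb i = U) <-> neighbor ends S U.

Lemma exists_shared_file j : exists f, ends f == [set S; nb j].
Proof.
by have [/(_ (ex_intro _ j erefl)) [f ef] _] := nb_onto (nb j); exists f; rewrite ef.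
Qed.

Definition shared_file j := xchoose (exists_shared_file j).
Local Notation e := shared_file.

Lemma ends_shared_file j : ends (e j) = [set S; nb j].
Proof. exact/eqP/(xchooseP (exists_shared_file j)). Qed.

Lemma server_neq_nb j : S != nb j.
Proof. by have := ends_card (e j); rewrite ends_shared_file cards2; case: (S != nb j). Qed.

Lemma shared_file_inj : injective e.
Proof.
move=> j j' /(congr1 ends); rewrite !ends_shared_file => eq_ends.
have : nb j \in [set S; nb j'] by rewrite -eq_ends !inE eqxx orbT.
by rewrite !inE eq_sym (negbTE (server_neq_nb j)) => /eqP /nb_inj.
Qed.

Lemma mem_ends_shared_file U j : U \in ends (e j) -> U = S \/ U = nb j.
Proof. by rewrite ends_shared_file !inE => /orP [] /eqP; [left|right]. Qed.

Definition hidden (n : nat) (f : E) : bool :=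
  [exists j : 'I_delta, (n <= j)%N && (e j == f)].

Definition reveal (n : nat) (W : files) : {ffun E -> option 'rV['F_2]_L} :=
  [ffun f => if hidden n f then None else Some (W f)].

Definition hide (n : nat) (c : {ffun E -> option 'rV['F_2]_L}) :
  {ffun E -> option 'rV['F_2]_L} :=
  [ffun f => if hidden n f then None else c f].

Lemma hidden_shared_file (i : 'I_delta) : hidden i (e i).
Proof. by apply/existsP; exists i; rewrite leqnn eqxx. Qed.

Lemma hiddenS_shared_file (i : 'I_delta) : hidden i.+1 (e i) = false.
Proof.
by apply/existsP => -[j /andP [ij /eqP /shared_file_inj ji]]; rewrite ji ltnn in ij.
Qed.

Lemma hiddenS (i : 'I_delta) f : f != e i -> hidden i.+1 f = hidden i f.
Proof.
move=> fei; apply/existsP/existsP => -[j /andP [ij /eqP ejf]]; exists j.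
  by rewrite ejf eqxx andbT ltnW.
rewrite ejf eqxx andbT ltn_neqAle ij andbT.
by apply: contraNneq fei => /val_inj ->; rewrite ejf.
Qed.

Lemma hiddenSW n f : hidden n.+1 f -> hidden n f.
Proof. by case/existsP => j /andP [nj ejf]; apply/existsP; exists j; rewrite ltnW. Qed.

Lemma hidden_delta f : hidden delta f = false.
Proof. by apply/existsP => -[j /andP []]; rewrite leqNgt ltn_ord. Qed.

Lemma hide_revealS n W : hide n (reveal n.+1 W) = reveal n W.
Proof.
apply/ffunP => f; rewrite !ffunE; case: ifP => // nf.
by case: ifP => // /hiddenSW; rewrite nf.
Qed.

Lemma revealS (i : 'I_delta) W :
  reveal i.+1 W = [ffun f => if f == e i then Some (W (e i)) else reveal i W f].
Proof.
apply/ffunP => f; rewrite !ffunE; have [->|fei] := eqVneq f (e i).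
  by rewrite hiddenS_shared_file.
by rewrite hiddenS.
Qed.

Lemma revealS_shared_file (i : 'I_delta) W : reveal i.+1 W (e i) = Some (W (e i)).
Proof. by rewrite ffunE hiddenS_shared_file. Qed.

Lemma dist_shared_file (i : 'I_delta) x c :
  dist unif_files (fun W => (W (e i), reveal i W)) (x, c)
  = dist unif_files (reveal i) c / (2 ^ L)%:R.
Proof.
(* Adding a constant to the hidden file e_i is a bijection that fixes [reveal i]. *)
have shift_inv x' : dist unif_files (fun W => (W (e i), reveal i W)) (x, c) =
                    dist unif_files (fun W => (W (e i), reveal i W)) (x', c).
  pose shift (W : files) : files := [ffun f => if f == e i then W f + (x - x') else W f].
  have shift_inj : injective shift.
    move=> W1 W2 /(congr1 (fun W : files => W _)) eqW; apply/ffunP => f.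
    by have := eqW f; rewrite !ffunE; case: eqP => // _ /addIr.
  rewrite /dist (reindex_inj shift_inj); apply: eq_bigl => W.
  have -> : reveal i (shift W) = reveal i W.
    apply/ffunP => f; rewrite !ffunE; case: ifP => // hf.
    by case: eqVneq hf => [->|]; rewrite ?hidden_shared_file.
  rewrite !ffunE eqxx !xpair_eqE; congr (_ && _).
  apply/eqP/eqP => [shifted|->]; last by rewrite addrC subrK.
  by rewrite -[W _](addrK (x - x')) shifted opprB addrC subrK.
have := sum_dist_pair unif_files (fun W => W (e i)) (reveal i) c.
under eq_bigr do rewrite -(shift_inv _).
rewrite sumr_const card_mx card_Fp // mul1n => <-.
by rewrite -[_ *+ _]mulr_natr mulfK // pnatr_eq0 expn_eq0.
Qed.

Lemma cHnats_shared_file (i : 'I_delta) :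
  cHnats unif_files (fun W => W (e i)) (reveal i) = L%:R * ln 2.
Proof.
rewrite /cHnats !HnatsE; under eq_bigr do rewrite dist_shared_file.
rewrite (eq_bigr (fun W => unif_files W * ln (dist unif_files (reveal i) (reveal i W))
                          - unif_files W * ln (2 ^ L)%:R)); last first.
  move=> W _; rewrite ln_div ?mulrBr // posrE ?ltr0n ?expn_gt0 //.
  exact: (dist_gt0 unif_files_ge0 (reveal i) (unif_files_gt0 W)).
by rewrite sumrB -big_distrl /= sum_unif_files mul1r natrX lnXn // mulr_natl; lra.
Qed.

Definition uncertainty (n : nat) (a : Qt) : R := cHnats unif_files (ans S a) (reveal n).

Lemma uncertaintyS_le n a : uncertainty n.+1 a <= uncertainty n a.
Proof.
have -> : uncertainty n a = cHnats unif_files (ans S a) (fun W => hide n (reveal n.+1 W)).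
  by apply: eq_cHnats => W; rewrite hide_revealS.
exact: (cHnats_mono unif_files_ge0 _ _ (hide n)).
Qed.

Lemma uncertainty_delta a : uncertainty delta a = 0.
Proof.
apply/eqP; rewrite /uncertainty /cHnats subr_eq0; apply/eqP.
apply: (@Hnats_relabel _ _ _ unif_files_ge0 _ _ _ (reveal delta)
  (fun c => (ans S a [ffun f => odflt 0 (c f)], c)) snd) => // W.
by congr (ans _ _ _, _); apply/ffunP => f; rewrite !ffunE hidden_delta.
Qed.

Lemma sum_uncertainty_drops_le a :
  \sum_(i < delta) (uncertainty i a - uncertainty i.+1 a) <= Hnats unif_files (ans S a).
Proof.
under eq_bigr do rewrite -opprB.
rewrite sumrN -(big_mkord xpredT (fun i => uncertainty i.+1 a - uncertainty i a)).
rewrite telescope_sumr //.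
by rewrite uncertainty_delta opprB subr0 (cHnats_le unif_files_ge0 sum_unif_files).
Qed.

Lemma shared_file_determined (i : 'I_delta) q W W' : 0 < pu (e i, q) ->
  ans S (q S) W = ans S (q S) W' ->
  (forall j : 'I_delta, (i <= j)%N -> ans (nb j) (q (nb j)) W = ans (nb j) (q (nb j)) W') ->
  reveal i W = reveal i W' -> W (e i) = W' (e i).
Proof.
move=> pu_gt0 eqS eq_nb eq_rev.
have P_gt0 W0 : 0 < P (e i, q, W0) by exact: mulr_gt0 pu_gt0 (unif_files_gt0 W0).
apply: (desired_determined (P_gt0 W) (P_gt0 W')); congr (_, _).
apply/ffunP => U; rewrite !ffunE /=; have [-> //|US] := eqVneq U S.
have [j /andP [ij /eqP <-]|not_nb] := pickP (fun j : 'I_delta => (i <= j)%N && (nb j == U)).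
  exact: eq_nb.
(* Every other server stores only revealed files. *)
apply: ans_local => f Uf.
have := congr1 (fun c : {ffun E -> option 'rV_L} => c f) eq_rev; rewrite !ffunE.
case: ifP => [/existsP [j /andP [ij /eqP ejf]] _|_ [] //].
move: Uf; rewrite -ejf => /mem_ends_shared_file [UeqS|Ueqnb].
  by rewrite UeqS eqxx in US.
by have := not_nb j; rewrite ij Ueqnb eqxx.
Qed.

Lemma genie_bound (i : 'I_delta) q : 0 < pu (e i, q) ->
  L%:R * ln 2 - \sum_(j < delta | (i <= j)%N) Hnats unif_files (ans (nb j) (q (nb j)))
  <= uncertainty i (q S) - uncertainty i.+1 (q S).
Proof.
move=> pu_gt0; set late := [set j : 'I_delta | (i <= j)%N].
set B := fun W => [ffun j => if j \in late then Some (ans (nb j) (q (nb j)) W) else None].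
have uncertaintyS : cHnats unif_files (ans S (q S)) (fun W => (W (e i), reveal i W))
                     = uncertainty i.+1 (q S).
  apply: (@cHnats_relabel _ _ _ unif_files_ge0 _ _ _ _ _ (reveal i.+1)
            (fun c => (odflt 0 (c (e i)), hide i c))
            (fun p => [ffun f => if f == e i then Some p.1 else p.2 f])) => W.
    by rewrite revealS_shared_file hide_revealS.
  exact: revealS.
have decode : cHnats unif_files (fun W => W (e i)) (reveal i)
              <= uncertainty i (q S) - uncertainty i.+1 (q S) + Hnats unif_files B.
  rewrite -uncertaintyS; apply: (cHnats_decode_le unif_files_ge0 sum_unif_files 0).
  move=> W W' [eqS eqB eq_rev]; apply: (@shared_file_determined i q W W' pu_gt0) => // j ij.
  have := congr1 (fun b : {ffun 'I_delta -> option At} => b j) eqB.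
  by rewrite !ffunE inE ij => -[].
have := Hnats_family_le unif_files_ge0 sum_unif_files (fun j => ans (nb j) (q (nb j))) late.
rewrite -/B (eq_bigl (fun j : 'I_delta => (i <= j)%N)) => [|j]; last by rewrite inE.
by rewrite cHnats_shared_file in decode; lra.
Qed.

Lemma shared_file_bound (i : 'I_delta) :
  L%:R * ln 2 - \sum_(j < delta | (i <= j)%N) Hnats P (answer_rv ans (nb j))
  <= expect (fun q => uncertainty i (q S) - uncertainty i.+1 (q S)).
Proof.
rewrite -(expect_given_query S (e i) (fun a => uncertainty i a - uncertainty i.+1 a)).
apply: le_trans (ler_expect_given (genie_bound (i := i))).
rewrite expect_givenBl expect_given_sum lerD2l lerN2; apply: ler_sum => j _.
rewrite (expect_given_query (nb j) (e i) (fun a => Hnats unif_files (ans (nb j) a))).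
exact: expect_Hnats_answer_le.
Qed.

Lemma answer_entropy_bound_nats :
  \sum_(i < delta) Num.max 0 (L%:R * ln 2 -
     \sum_(j < delta | (i <= j)%N) Hnats P (answer_rv ans (nb j)))
  <= Hnats P (answer_rv ans S).
Proof.
apply: (sum_max0_le shared_file_bound) => [i|].
  by apply: expect_ge0 => q; rewrite subr_ge0 uncertaintyS_le.
rewrite expect_sum; apply: le_trans (expect_Hnats_answer_le S); apply: ler_expect => q.
exact: sum_uncertainty_drops_le.
Qed.

End PIRScheme.

Unset Implicit Arguments.
Set Strict Implicit.

Theorem theorem2
  (R : realType)
  (* the graph: servers T, files E with endpoint sets [ends] *)
  (T E : finType) (ends : E -> {set T})
  (ends_inj : injective ends)
  (ends_card : forall f, #|ends f| = 2%N)
  (* file length *)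
  (L : nat)
  (* query and answer alphabets *)
  (Qt At : finType)
  (* user's joint pmf of (theta, (Q_T)_T) *)
  (pu : E * {ffun T -> Qt} -> R)
  (pu_ge0 : forall x, 0 <= pu x)
  (pu_sum1 : \sum_x pu x = 1)
  (theta_unif : forall k : E, \sum_(q : {ffun T -> Qt}) pu (k, q) = #|E|%:R^-1)
  (* answer functions: A_S = ans S Q_S W, depending only on W_S *)
  (ans : T -> Qt -> {ffun E -> 'rV['F_2]_L} -> At)
  (ans_local : forall S q (W W' : {ffun E -> 'rV['F_2]_L}),
      (forall f, S \in ends f -> W f = W' f) -> ans S q W = ans S q W')
  (* reliability: H(W_theta | all answers, all queries) = 0 *)
  (reliable : centropy (pir_pmf pu) (@desired_rv T E Qt L)
                 (fun w => (answers_rv ans w, queries_rv w)) = 0)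
  (* privacy: H(theta | Q_S, W_S) = log K for every server S *)
  (private : forall S : T,
      centropy (pir_pmf pu) (@theta_rv T E Qt L)
               (fun w => (query_rv S w, stored_rv ends S w)) = log2 (#|E|%:R : R))
  (* a server S of degree delta with an enumeration of its neighbours *)
  (S : T) (delta : nat) (deg_S : degree ends S = delta)
  (nb : 'I_delta -> T) (nb_inj : injective nb)
  (nb_onto : forall U, (exists i, nb i = U) <-> neighbor ends S U) :
  entropy (pir_pmf pu) (answer_rv ans S)
  >= \sum_(i < delta)
       Num.max 0 (L%:R - \sum_(j < delta | (i <= j)%N)
                           entropy (pir_pmf pu) (answer_rv ans (nb j))).
Proof.
have ln2_gt0 : 0 < ln (2 : R) := ln2_gt0 R.
have bits i : Num.max 0 (L%:R - \sum_(j < delta | (i <= j)%N)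
                                  entropy (pir_pmf pu) (answer_rv ans (nb j)))
    = Num.max 0 (L%:R * ln 2 - \sum_(j < delta | (i <= j)%N)
                                  Hnats (pir_pmf pu) (answer_rv ans (nb j))) / ln 2.
  rewrite maxr_pMl ?invr_ge0 ?ltW // mul0r mulrBl mulfK ?lt0r_neq0 // big_distrl /=.
  by under [in RHS]eq_bigr do rewrite -entropyE.
under eq_bigr do rewrite bits.
rewrite -big_distrl /= entropyE ler_pM2r ?invr_gt0 //.
exact: (answer_entropy_bound_nats pu_ge0 pu_sum1 theta_unif private reliable ends_card
          ans_local nb_inj nb_onto).
Qed.
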